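(* Let $X=[-1,1]\times[0,e^{-2\pi}]$, $X_1=\{(x,y)\in X:y=0,\ x>0\}\cup\{(x,y)\in X:y>0,\ x>y\sin(-\log y)\}$, $X_2=\{(x,y)\in X:y=0,\ x<0\}\cup\{(x,y)\in X:y>0,\ x<y\sin(-\log y)\}$, $f_1(x,y)=e^{-\pi}(x,y)$ and $f_2(x,y)=\left(-\tfrac12+\tfrac12(x+\tfrac12),\ \tfrac12 y\right)$. Let $f:X\to X$ be any map with $f|_{X_1}=f_1$ and $f|_{X_2}=f_2$. Then for every $n\ge2$ there is an atom of generation $n$ of $f$ which is disconnected and has infinitely many connected components.
   Context: For $A\subset X$ let $F_i(A):=\overline{f(A\cap X_i)}$ ($i=1,2$). An atom of generation $n\ge1$ is a set of the form $F_{i_n}\circ\cdots\circ F_{i_1}(X)$ with $i_1,\dots,i_n\in\{1,2\}$. *)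

From HB Require Import structures.
From mathcomp Require Import all_boot all_order all_algebra.
From mathcomp Require Import all_classical all_reals all_analysis.
Set Implicit Arguments. Unset Strict Implicit. Unset Printing Implicit Defensive.
Import Order.TTheory GRing.Theory Num.Theory.
Local Open Scope classical_set_scope.
Local Open Scope ring_scope.

Section Defs.
Variable R : realType.
Implicit Types p : R * R.

Definition Xset : set (R * R) :=
  [set p | -1 <= p.1 <= 1 /\ 0 <= p.2 <= expR (- (2 * pi))].

Definition X1set : set (R * R) :=
  [set p | Xset p /\ ((p.2 = 0 /\ 0 < p.1) \/
                      (0 < p.2 /\ p.2 * sin (- ln p.2) < p.1))].

Definition X2set : set (R * R) :=
  [set p | Xset p /\ ((p.2 = 0 /\ p.1 < 0) \/
                      (0 < p.2 /\ p.1 < p.2 * sin (- ln p.2)))].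

Definition f1 p : R * R := (expR (- pi) * p.1, expR (- pi) * p.2).
Definition f2 p : R * R :=
  (- (1/2) + (1/2) * (p.1 + 1/2), (1/2) * p.2).

(* index i : bool, with true standing for 1 and false for 2 *)
Definition Xi (i : bool) : set (R * R) := if i then X1set else X2set.

Definition Fop (f : R * R -> R * R) (i : bool) (A : set (R * R)) : set (R * R) :=
  @closure (R^o * R^o)%type (f @` (A `&` Xi i)).

(* atom F_{i_n} o ... o F_{i_1}(X) for s = [:: i_1; ...; i_n] *)
Definition atom (f : R * R -> R * R) (s : seq bool) : set (R * R) :=
  foldl (fun A i => Fop f i A) Xset s.

Definition components (A : set (R * R)) : set (set (R * R)) :=
  [set @connected_component (R^o * R^o)%type A x | x in A].
End Defs.

From HB Require Import structures.
From mathcomp Require Import all_boot all_order all_algebra.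
From mathcomp Require Import all_classical all_reals all_analysis.
From mathcomp Require Import lra ring.
Import Order.TTheory GRing.Theory Num.Theory.
Local Open Scope classical_set_scope.
Local Open Scope ring_scope.

(** On the gaps e^{-(2k+2)pi} < y < e^{-(2k+1)pi} the curve x = y sin(-log y)
   separating X_1 from X_2 lies left of the axis.  Since f_1 multiplies heights
   by e^{-pi}, it flips the sign of sin(-log y); hence F_1(X) meets X_2 in no
   point whose height lies in a gap, and as F_2 halves heights, the atom
   F_2^{n-1}(F_1(X)) misses every gap scaled by 2^{-(n-1)}.  On the other hand,
   for k >= 2 the crest (0, e^{-(2k+1/2)pi}) of the curve lies in X_2 and in
   F_1(X), and its images under f_2 give points of the atom at heights
   e^{-(2k+1/2)pi} 2^{-(n-1)}.  A scaled gap separates any two of them, so no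
   connected subset of the atom contains two of these points. *)

Lemma not_connected_infinite_components (T : topologicalType) (A : set T)
    (q : nat -> T) :
  (forall k, A (q k)) ->
  (forall k k' C, (k < k')%N ->
     connected C -> C `<=` A -> C (q k) -> ~ C (q k')) ->
  ~ connected A /\ ~ finite_set [set connected_component A x | x in A].
Proof.
move=> Aq sep; split; first by move=> cA; exact: (sep 0 1 A)%N.
pose g k := connected_component A (q k).
have g_neq k k' : (k < k')%N -> g k <> g k'.
  move=> kk' gkk'; apply: (sep k k' (g k) kk').
  - exact: component_connected.
  - exact: connected_component_sub.
  - exact: connected_component_refl.
  - by rewrite gkk'; exact: connected_component_refl.
have g_inj : injective g.
  move=> k k' gkk'; case: (ltngtP k k') => // kk'.
  - by case: (g_neq _ _ kk' gkk').
  - by case: (g_neq _ _ kk' (esym gkk')).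
move=> fin; apply: infinite_nat.
apply: (@sub_finite_set _ _ (g @^-1` [set connected_component A x | x in A])).
  by move=> k _; exists (q k).
by apply: finite_preimage fin => x y _ _; exact: g_inj.
Qed.

Section Strips.
Context {R : realType}.
Local Notation plane := (R^o * R^o)%type.

Definition misses_strip (A : set (R * R)) (a b : R) :=
  forall p, A p -> ~ a < p.2 < b.

Lemma open_strip_left (a b c : R) :
  @open plane [set p | a < p.2 < b /\ p.1 < c].
Proof.
have -> : [set p : plane | a < p.2 < b /\ p.1 < c] =
    (snd @^-1` ([set y : R^o | a < y] `&` [set y | y < b])) `&`
    (fst @^-1` [set x : R^o | x < c]).
  by apply/seteqP; split => p /=; [case=> /andP[]|case=> -[] /= -> ->].
apply: (@openI plane _ _); apply: open_comp.
- by move=> p _; exact: cvg_snd.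
- by apply: openI; [exact: open_gt|exact: open_lt].
- by move=> p _; exact: cvg_fst.
- exact: open_lt.
Qed.

Lemma closure_meets_open {T : topologicalType} {S U : set T} {p : T} :
  closure S p -> open U -> U p -> exists2 q, S q & U q.
Proof.
move=> clp oU Up; have [q []] := clp U (open_nbhs_nbhs (conj oU Up)).
by exists q.
Qed.

Lemma closure_misses_strip (S : set (R * R)) (a b : R) :
  misses_strip S a b -> misses_strip (@closure plane S) a b.
Proof.
move=> Smiss p clp pab.
have [q Sq [qab _]] := closure_meets_open clp (open_strip_left a b (p.1 + 1))
  (conj pab (ltr_pwDr ltr01 (lexx p.1))).
exact: Smiss Sq qab.
Qed.

Lemma connected_misses_strip (a b : R) {C : set (R * R)} {q q' : R * R} :
  @connected plane C -> misses_strip C a b -> a < b ->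
  C q -> C q' -> q.2 <= a -> b <= q'.2 -> False.
Proof.
move=> cC Cmiss ab Cq Cq' qa bq'.
have /connected_intervalP snd_itv : @connected R^o (snd @` C).
  apply: connected_continuous_connected cC _.
  by apply: continuous_subspaceT => p; exact: cvg_snd.
have [p Cp pm] : (snd @` C) ((a + b) / 2).
  by apply: (snd_itv q.2 q'.2); [exists q|exists q'|apply/andP; split; lra].
by apply: (Cmiss p Cp); rewrite pm; apply/andP; split; lra.
Qed.

End Strips.

Section Heights.
Context {R : realType}.

Lemma sinD_2pi_nat (k : nat) (t : R) : sin (t + 2 * k%:R * pi) = sin t.
Proof.
have -> : 2 * k%:R * pi = pi *+ 2 *+ k :> R by rewrite -mulrnA -mulr_natr; ring.
by apply: periodicn; exact: sinD2pi.
Qed.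

Lemma sin_lt0_odd_pi (k : nat) (t : R) :
  (2 * k%:R + 1) * pi < t < (2 * k%:R + 2) * pi -> sin t < 0.
Proof.
move=> /andP[lo hi].
have -> : t = (t - (2 * k%:R + 1) * pi) + pi + 2 * k%:R * pi by ring.
rewrite sinD_2pi_nat sinDpi oppr_lt0; apply: sin_gt0_pi.
by apply/andP; split; lra.
Qed.

Definition gap_lo (k : nat) : R := expR (- ((2 * k%:R + 2) * pi)).
Definition gap_hi (k : nat) : R := expR (- ((2 * k%:R + 1) * pi)).
Definition crest (k : nat) : R := expR (- ((2 * k%:R + 1/2) * pi)).

Lemma sin_ln_gap (k : nat) (y : R) :
  gap_lo k < y < gap_hi k -> sin (- ln y) < 0.
Proof.
move=> /andP[lo hi]; apply: (@sin_lt0_odd_pi k).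
have y0 : 0 < y by apply: lt_trans lo; exact: expR_gt0.
rewrite /gap_lo /gap_hi -(lnK y0) !ltr_expR in lo hi.
by apply/andP; split; lra.
Qed.

Lemma sin_ln_crest (k : nat) : sin (- ln (crest k)) = 1.
Proof.
rewrite /crest expRK opprK.
have -> : (2 * k%:R + 1/2) * pi = pi / 2 + 2 * k%:R * pi :> R by ring.
by rewrite sinD_2pi_nat sin_pihalf.
Qed.

Lemma sin_ln_expR_pi_crest (k : nat) :
  sin (- ln (expR pi * crest k.+1)) = -1.
Proof.
rewrite /crest -expRD expRK.
have -> : - (pi - (2 * k.+1%:R + 1/2) * pi) = pi / 2 + pi + 2 * k%:R * pi :> R.
  by rewrite -addn1 natrD; ring.
by rewrite sinD_2pi_nat sinDpi sin_pihalf.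
Qed.

Lemma expR_Nmulpi_lt (c c' : R) :
  c < c' -> expR (- (c' * pi)) < expR (- (c * pi)).
Proof. by move=> cc'; rewrite ltr_expR ltrN2 ltr_pM2r ?pi_gt0. Qed.

Lemma gap_lo_lt_hi (k : nat) : gap_lo k < gap_hi k.
Proof. by apply: expR_Nmulpi_lt; lra. Qed.

Lemma gap_hi_lt_crest (k : nat) : gap_hi k < crest k.
Proof. by apply: expR_Nmulpi_lt; lra. Qed.

Lemma crest_le_gap_lo (k k' : nat) : (k < k')%N -> crest k' <= gap_lo k.
Proof.
move=> kk'; have : k.+1%:R <= k'%:R :> R by rewrite ler_nat.
by rewrite -natr1 => kk'R; apply/ltW/expR_Nmulpi_lt; lra.
Qed.

Lemma expR_pi_crest_le (k : nat) : (2 <= k)%N ->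
  expR pi * crest k <= expR (- (2 * pi)).
Proof.
rewrite -(ler_nat R) /crest -expRD ler_expR => k2.
have := @pi_gt0 R; nra.
Qed.

Lemma expR_N2pi_lt_quarter : expR (- (2 * pi)) < 1/4 :> R.
Proof.
have e2pi_ge5 : 5 <= expR (2 * pi) :> R.
  by have := @expR_ge1Dx R (2 * pi); have := @pi_ge2 R; lra.
have : expR (- (2 * pi)) * expR (2 * pi) = 1 :> R by rewrite -expRD addNr expR0.
have := @expR_gt0 R (- (2 * pi)); nra.
Qed.

End Heights.

Section Atoms.
Context {R : realType} {f : R * R -> R * R}.
Hypothesis fX : forall p, @Xset R p -> @Xset R (f p).
Hypothesis f_X1 : forall p, @X1set R p -> f p = f1 p.
Hypothesis f_X2 : forall p, @X2set R p -> f p = f2 p.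

Lemma atom_cons_nseq (i j : bool) (n : nat) :
  atom f (i :: nseq n j) = iter n (Fop f j) (Fop f i (@Xset R)).
Proof.
rewrite /atom /=; elim: n (Fop f i (@Xset R)) => //= n IH A.
by rewrite IH -iterSr.
Qed.

Lemma X2set_left (q : R * R) :
  @Xset R q -> 0 < q.2 -> q.1 <= - (1/4) -> @X2set R q.
Proof.
move=> Xq q2 q1; split=> //; right; split=> //.
have q2_lt : q.2 < 1/4.
  by case: Xq => _ /andP[_ /le_lt_trans]; apply; exact: expR_N2pi_lt_quarter.
have := sin_geN1 (- ln q.2); nra.
Qed.

Lemma F2_misses_strip (A : set (R * R)) (a b : R) :
  misses_strip (A `&` @X2set R) a b ->
  misses_strip (Fop f false A) (a / 2) (b / 2).
Proof.
move=> Amiss; apply: closure_misses_strip => _ [p [Ap X2p] <-].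
rewrite f_X2 //= => /andP[lo hi]; apply: (Amiss p (conj Ap X2p)).
by apply/andP; split; lra.
Qed.

Lemma iter_F2_misses_strip (A : set (R * R)) (a b : R) (j : nat) :
  misses_strip (A `&` @X2set R) a b ->
  misses_strip (iter j.+1 (Fop f false) A) (a / 2 ^+ j.+1) (b / 2 ^+ j.+1).
Proof.
move=> Amiss; elim: j => [|j IH]; first by rewrite expr1; exact: F2_misses_strip.
rewrite iterS (exprSr 2 j.+1) !invfM !mulrA.
by apply: F2_misses_strip => p [+ _]; exact: IH.
Qed.

Lemma F1X_misses_strip (k : nat) :
  misses_strip (Fop f true (@Xset R) `&` @X2set R) (gap_lo k) (gap_hi k).
Proof.
move=> p [clp [_ X2p]] pgap.
have p2 : 0 < p.2 by case/andP: pgap => + _; apply: lt_trans; exact: expR_gt0.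
have p1 : p.1 < 0.
  case: X2p => [[p20 _]|[_ lt_p1]]; first by move: p2; rewrite p20 ltxx.
  by apply: lt_trans lt_p1 _; rewrite pmulr_rlt0 // (sin_ln_gap _ _ pgap).
have [_ [r [_ X1r] <-] [rgap r1]] :=
  closure_meets_open clp (open_strip_left _ _ 0) (conj pgap p1).
move: rgap r1; rewrite f_X1 //= => rgap r1.
have e0 : 0 < expR (- pi) :> R := expR_gt0 _.
case: X1r => _ [[r20 _]|[r2 lt_r1]].
  by move: rgap; rewrite r20 mulr0 => /andP[+ _]; rewrite ltNge ltW // expR_gt0.
have sin_r : sin (- ln r.2) < 0.
  rewrite -(pmulr_rlt0 _ r2); apply: lt_trans lt_r1 _.
  by rewrite -(pmulr_rlt0 _ e0).
have := sin_ln_gap _ _ rgap.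
rewrite lnM ?posrE // expRK.
have -> : - (- pi + ln r.2) = - ln r.2 + pi by ring.
by rewrite sinDpi oppr_lt0 => /(lt_trans sin_r); rewrite ltxx.
Qed.

Lemma crest_in_X (k : nat) : (2 <= k)%N -> @Xset R (0, crest k).
Proof.
move=> k2; split; first by rewrite /=; apply/andP; split; lra.
apply/andP; split; first exact/ltW/expR_gt0.
rewrite /=; apply: le_trans _ (expR_pi_crest_le _ k2).
by rewrite ler_peMl ?expR_ge0 // -expR0 ler_expR pi_ge0.
Qed.

Lemma crest_in_X2 (k : nat) : (2 <= k)%N -> @X2set R (0, crest k).
Proof.
move=> k2; split; first exact: crest_in_X.
by right; split; [exact: expR_gt0|rewrite /= sin_ln_crest mulr1 expR_gt0].
Qed.

(* (0, crest k) is the f_1-image of (0, e^pi crest k), which lies in X_1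
   because the curve has a trough at that height. *)
Lemma crest_in_F1X (k : nat) : (2 <= k)%N -> Fop f true (@Xset R) (0, crest k).
Proof.
case: k => // k k2; apply: subset_closure.
have r2 : 0 < expR pi * crest k.+1 :> R by rewrite pmulr_rgt0 ?expR_gt0.
have X1r : @X1set R (0, expR pi * crest k.+1).
  split.
    split; first by rewrite /=; apply/andP; split; lra.
    by rewrite /= (ltW r2) expR_pi_crest_le.
  by right; split=> //=; rewrite sin_ln_expR_pi_crest mulrN1 oppr_lt0.
exists (0, expR pi * crest k.+1); first by split=> //; case: X1r.
by rewrite f_X1 // /f1 /= mulr0 mulrA -expRD addNr expR0 mul1r.
Qed.

Lemma iter_F2_point (A : set (R * R)) (p : R * R) (j : nat) :
  A p -> @X2set R p -> 0 < p.2 -> p.1 <= 0 ->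
  exists2 q, iter j.+1 (Fop f false) A q & q.2 = p.2 / 2 ^+ j.+1.
Proof.
elim: j A p => [|j IH] A p Ap X2p p2 p1.
  exists (f p); first by apply: subset_closure; exists p => //; split.
  by rewrite f_X2 // expr1 /= mul1r mulrC.
have FAfp : Fop f false A (f p) by apply: subset_closure; exists p => //; split.
have fp_eq : f p = f2 p := f_X2 _ X2p.
have fp2 : 0 < (f p).2 by rewrite fp_eq /=; apply: mulr_gt0.
have fp1 : (f p).1 <= - (1/4) by rewrite fp_eq /=; lra.
have X2fp : @X2set R (f p).
  by apply: X2set_left => //; apply: fX; case: X2p.
have [q Fq q2] := IH _ _ FAfp X2fp fp2 ltac:(lra).
exists q; first by rewrite iterSr.
by rewrite q2 fp_eq /= (exprS 2 j.+1); field; rewrite expf_neq0.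
Qed.

End Atoms.

Theorem proposition7 (R : realType) (f : R * R -> R * R)
  (fX : forall p, @Xset R p -> @Xset R (f p))
  (f_X1 : forall p, @X1set R p -> f p = f1 p)
  (f_X2 : forall p, @X2set R p -> f p = f2 p) :
  forall n : nat, (2 <= n)%N ->
    exists s : seq bool, size s = n /\
      ~ @connected (R^o * R^o)%type (atom f s) /\ ~ finite_set (components (atom f s)).
Proof.
case=> [|[|j]] // _; exists (true :: nseq j.+1 false).
split; first by rewrite /= size_nseq.
rewrite atom_cons_nseq; set D := iter j.+1 _ _.
have w_gt0 : 0 < (2 ^+ j.+1 : R)^-1 by rewrite invr_gt0 exprn_gt0.
have /choice [q Q] : forall k, exists q, D q /\ q.2 = crest k.+2 / 2 ^+ j.+1.
  move=> k; have [q Dq q2] := iter_F2_point fX f_X2 _ _ j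
    (crest_in_F1X f_X1 k.+2 isT) (crest_in_X2 k.+2 isT) (expR_gt0 _) (lexx 0).
  by exists q.
apply: (@not_connected_infinite_components (R^o * R^o)%type D q).
  by move=> k; case: (Q k).
move=> k k' C kk' cC CD Cqk Cqk'; have [[_ qk2] [_ qk'2]] := (Q k, Q k').
apply: (connected_misses_strip (gap_lo k.+2 / 2 ^+ j.+1)
  (gap_hi k.+2 / 2 ^+ j.+1) cC _ _ Cqk' Cqk).
- move=> p /CD.
  exact: (iter_F2_misses_strip f_X2 _ _ _ j (F1X_misses_strip f_X1 k.+2)).
- by rewrite ltr_pM2r // gap_lo_lt_hi.
- by rewrite qk'2 ler_pM2r // crest_le_gap_lo.
- by rewrite qk2 ler_pM2r // ltW // gap_hi_lt_crest.
Qed.
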